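(* Let $\delta>0$, let $X$ be a geodesic $\delta$--hyperbolic space on which a group $G$ acts by isometries, let $U\subset G$ be finite, let $x_0\in X$ satisfy $\frac1{|U|}\sum_{u\in U}|ux_0-x_0|\leqslant E(U)+\delta$, and let $d$ be either $1$ or $\log_2(2|U|)$. Let $y_0\in S(x_0,1000d\delta)$ and let $B(y_0,100d\delta)$ be the closed ball of radius $100d\delta$ about $y_0$. Then $$\left|\bigcup_{y,z\in B(y_0,100d\delta)\cap S(x_0,1000d\delta)}U_{y,z}\right|\leqslant\frac23|U|.$$
   Context: Distance $|x-y|$; Gromov product $(p,q)_x=\frac12(|p-x|+|q-x|-|p-q|)$; $X$ is $\delta$--hyperbolic if $(p,r)_x\geqslant\min\{(p,q)_x,(q,r)_x\}-\delta$ for all $p,q,r,x$. $E(U):=\inf_{x\in X}\frac1{|U|}\sum_{u\in U}|ux-x|$. $S(x_0,R):=\{x\mid|x-x_0|=R\}$. For $y,z\in S(x_0,1000d\delta)$, $U_{y,z}:=\{u\in U\mid |ux_0-x_0|\geqslant4000d\delta,\ (x_0,ux_0)_y\leqslant d\delta,\ (x_0,u^{-1}x_0)_z\leqslant d\delta\}$. *)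

From Stdlib Require Import Reals List ClassicalDescription.
From Coquelicot Require Import Coquelicot.
Open Scope R_scope.

Section Defs.
Context {X : Type} (dist : X -> X -> R).

Definition is_metric : Prop :=
  (forall x y, 0 <= dist x y) /\
  (forall x y, dist x y = 0 <-> x = y) /\
  (forall x y, dist x y = dist y x) /\
  (forall x y z, dist x z <= dist x y + dist y z).

Definition is_geodesic : Prop :=
  forall x y, exists gam : R -> X,
    gam 0 = x /\ gam (dist x y) = y /\
    forall s t, 0 <= s <= dist x y -> 0 <= t <= dist x y ->
      dist (gam s) (gam t) = Rabs (s - t).

Definition gromov (p q x : X) : R :=
  / 2 * (dist p x + dist q x - dist p q).

Definition hyperbolic (delta : R) : Prop :=
  forall p q r x,
    gromov p r x >= Rmin (gromov p q x) (gromov q r x) - delta.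

Definition sphere (x0 : X) (rad : R) (x : X) : Prop := dist x x0 = rad.
Definition cball (y0 : X) (rad : R) (y : X) : Prop := dist y y0 <= rad.
End Defs.

Definition is_group {G : Type} (mul : G -> G -> G) (inv : G -> G) (e : G) : Prop :=
  (forall a b c, mul a (mul b c) = mul (mul a b) c) /\
  (forall a, mul e a = a) /\ (forall a, mul a e = a) /\
  (forall a, mul (inv a) a = e) /\ (forall a, mul a (inv a) = e).

Definition isometric_action {G X : Type} (dist : X -> X -> R)
  (mul : G -> G -> G) (e : G) (act : G -> X -> X) : Prop :=
  (forall x, act e x = x) /\
  (forall g h x, act (mul g h) x = act g (act h x)) /\
  (forall g x y, dist (act g x) (act g y) = dist x y).

(** finite subset U of G, represented by a duplicate-free list; |U| = length U *)
Definition card_list {G : Type} (U : list G) : R := INR (length U).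

Definition avg_disp {G X : Type} (dist : X -> X -> R) (act : G -> X -> X)
  (U : list G) (x : X) : R :=
  / card_list U * fold_right Rplus 0 (map (fun u => dist (act u x) x) U).

Definition E_U {G X : Type} (dist : X -> X -> R) (act : G -> X -> X)
  (U : list G) : Rbar :=
  Glb_Rbar (fun r => exists x : X, r = avg_disp dist act U x).

Definition count_in {G : Type} (U : list G) (P : G -> Prop) : nat :=
  length (filter (fun u => if excluded_middle_informative (P u) then true else false) U).

Definition in_Uyz {G X : Type} (dist : X -> X -> R) (inv : G -> G)
  (act : G -> X -> X) (U : list G) (x0 : X) (d delta : R) (y z : X) (u : G) : Prop :=
  In u U /\ dist (act u x0) x0 >= 4000 * d * delta /\
  gromov dist x0 (act u x0) y <= d * delta /\
  gromov dist x0 (act (inv u) x0) z <= d * delta.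

(* At a point y0 on the sphere S(x0, R), every u moves y0 by at most
   |u x0 - x0| + 2R.  If u lies in some U_{y,z} with y, z on that sphere and
   r-close to y0, then y and u z are "aligned" along the long segment
   [x0, u x0] at the same distance R from its two ends, so hyperbolicity
   makes y and u z almost coincide and u moves y0 by about 4R - 2r less than
   that trivial bound.  Summing over U and comparing with the near-minimality
   of the average displacement at x0 shows that such u form at most a
   fraction (2R + delta) / (4R - 2r - 4 d delta - 2 delta) < 2/3 of U,
   where R = 1000 d delta and r = 100 d delta. *)
From Stdlib Require Import Reals List Lra ClassicalDescription.
From Coquelicot Require Import Coquelicot.
Open Scope R_scope.

Section MetricSpace.
Context {X : Type} {dist : X -> X -> R} {delta : R}.
Hypothesis dist_metric : is_metric dist.

Lemma dist_sym (x y : X) : dist x y = dist y x.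
Proof. destruct dist_metric as (_ & _ & Hsym & _); apply Hsym. Qed.

Lemma dist_triangle (x y z : X) : dist x z <= dist x y + dist y z.
Proof. destruct dist_metric as (_ & _ & _ & Htri); apply Htri. Qed.

Hypothesis dist_hyperbolic : hyperbolic dist delta.

(* Both (y, p)_x0 and (p, q)_x0 are at least R - D, the second because
   L >= 2R - D; hyperbolicity transfers this to (y, q)_x0. *)
Lemma dist_le_of_gromov_le (x0 p y q : X) (R L D : R) :
  dist y x0 = R -> dist p q = R -> dist p x0 = L -> 2 * R - D <= L ->
  gromov dist x0 p y <= D -> gromov dist p x0 q <= D ->
  dist y q <= L - 2 * R + 4 * D + 2 * delta.
Proof.
  unfold gromov; intros Hy Hq HL HRL Hgy Hgq.
  assert (Hthin := dist_hyperbolic y p q x0); unfold gromov in Hthin.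
  assert (Tq := dist_triangle p q x0).
  rewrite (dist_sym x0 y), (dist_sym x0 p), (dist_sym p y) in Hgy.
  rewrite (dist_sym x0 q) in Hgq.
  assert (Hmin : R - D <= Rmin (/ 2 * (dist y x0 + dist p x0 - dist y p))
                               (/ 2 * (dist p x0 + dist q x0 - dist p q)))
    by (apply Rmin_glb; lra).
  lra.
Qed.

End MetricSpace.

Section IsometricAction.
Context {X G : Type} {dist : X -> X -> R} {delta : R}.
Context {mul : G -> G -> G} {inv : G -> G} {e : G} {act : G -> X -> X}.
Hypothesis dist_metric : is_metric dist.
Hypothesis dist_hyperbolic : hyperbolic dist delta.
Hypothesis G_group : is_group mul inv e.
Hypothesis act_isometric : isometric_action dist mul e act.

Lemma dist_act (g : G) (x y : X) : dist (act g x) (act g y) = dist x y.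
Proof. destruct act_isometric as (_ & _ & Hiso); apply Hiso. Qed.

Lemma act_invK (g : G) (x : X) : act g (act (inv g) x) = x.
Proof.
  destruct G_group as (_ & _ & _ & _ & HmulV).
  destruct act_isometric as (Hact1 & HactM & _).
  now rewrite <- HactM, HmulV, Hact1.
Qed.

Lemma gromov_act (g : G) (p q x : X) :
  gromov dist (act g p) (act g q) (act g x) = gromov dist p q x.
Proof. unfold gromov; now rewrite !dist_act. Qed.

Lemma displacement_le (g : G) (x0 y0 : X) :
  dist (act g y0) y0 <= dist (act g x0) x0 + 2 * dist y0 x0.
Proof.
  assert (T1 := dist_triangle dist_metric (act g y0) (act g x0) y0).
  assert (T2 := dist_triangle dist_metric (act g x0) x0 y0).
  rewrite dist_act in T1; rewrite (dist_sym dist_metric x0 y0) in T2; lra.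
Qed.

(* Translating the condition on z by g puts g z at distance R from g x0 with
   (g x0, x0)_{g z} small, so [dist_le_of_gromov_le] applies to y and g z. *)
Lemma displacement_le_of_gromov_le (g : G) (x0 y0 y z : X) (R r D : R) :
  dist y x0 = R -> dist z x0 = R -> dist y y0 <= r -> dist z y0 <= r ->
  2 * R - D <= dist (act g x0) x0 ->
  gromov dist x0 (act g x0) y <= D -> gromov dist x0 (act (inv g) x0) z <= D ->
  dist (act g y0) y0 <= dist (act g x0) x0 - 2 * R + 2 * r + 4 * D + 2 * delta.
Proof.
  intros Hy Hz Hyy0 Hzy0 HL Hgy Hgz.
  rewrite <- (gromov_act g), act_invK in Hgz.
  assert (Hgzy : dist (act g x0) (act g z) = R)
    by now rewrite dist_act, (dist_sym dist_metric x0 z).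
  assert (Hclose := dist_le_of_gromov_le dist_metric dist_hyperbolic
                      x0 (act g x0) y (act g z) R (dist (act g x0) x0) D
                      Hy Hgzy eq_refl HL Hgy Hgz).
  assert (T1 := dist_triangle dist_metric (act g y0) (act g z) y0).
  assert (T2 := dist_triangle dist_metric (act g z) y y0).
  rewrite dist_act, (dist_sym dist_metric y0 z) in T1.
  rewrite (dist_sym dist_metric (act g z) y) in T2.
  lra.
Qed.

End IsometricAction.

Definition total_disp {G X : Type} (dist : X -> X -> R) (act : G -> X -> X)
  (U : list G) (x : X) : R :=
  fold_right Rplus 0 (map (fun u => dist (act u x) x) U).

Lemma total_disp_le_of_near_inf {G X : Type} (dist : X -> X -> R)
  (act : G -> X -> X) (U : list G) (x0 y : X) (delta : R) :
  0 < card_list U ->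
  Rbar_le (avg_disp dist act U x0) (Rbar_plus (E_U dist act U) delta) ->
  total_disp dist act U x0 <= total_disp dist act U y + card_list U * delta.
Proof.
  intros Hn Hx0.
  assert (Hinf := proj1 (Glb_Rbar_correct
                    (fun r => exists x : X, r = avg_disp dist act U x))
                    (avg_disp dist act U y) (ex_intro _ y eq_refl)).
  unfold E_U in Hx0.
  destruct (Glb_Rbar _) as [m | |]; simpl in Hx0, Hinf; try contradiction.
  unfold avg_disp in Hx0, Hinf; fold (total_disp dist act U x0) in Hx0;
    fold (total_disp dist act U y) in Hinf.
  apply (Rmult_le_reg_l (/ card_list U)); [now apply Rinv_0_lt_compat |].
  rewrite Rmult_plus_distr_l, <- Rmult_assoc, Rinv_l by lra.
  lra.
Qed.

Lemma sum_le_sub_count {G : Type} (l : list G) (a b : G -> R) (P : G -> Prop)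
  (K c : R) :
  (forall u, In u l -> a u <= b u + K) ->
  (forall u, In u l -> P u -> a u <= b u + K - c) ->
  fold_right Rplus 0 (map a l) <=
  fold_right Rplus 0 (map b l) + K * INR (length l) - c * INR (count_in l P).
Proof.
  unfold count_in; induction l as [|v l IH]; intros Hall HP;
    cbn [map fold_right length filter].
  - simpl; lra.
  - assert (IHl := IH (fun u Hu => Hall u (or_intror Hu))
                      (fun u Hu => HP u (or_intror Hu))).
    assert (Hv := Hall v (or_introl eq_refl)).
    rewrite S_INR.
    destruct (excluded_middle_informative (P v)) as [Pv | _]; cbn [length].
    + assert (HPv := HP v (or_introl eq_refl) Pv); rewrite S_INR; lra.
    + lra.
Qed.

Lemma le_two_thirds (k n K c : R) :
  0 < c -> 0 <= n -> 3 * K <= 2 * c -> c * k <= K * n -> k <= 2 / 3 * n.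
Proof. intros Hc Hn HKc Hk; nra. Qed.

Lemma one_le_ln_double_div_ln2 (n : R) : 1 <= n -> 1 <= ln (2 * n) / ln 2.
Proof.
  intros Hn.
  assert (Hln2 : 0 < ln 2) by (rewrite <- ln_1; apply ln_increasing; lra).
  assert (ln 2 <= ln (2 * n)) by (apply ln_le; lra).
  unfold Rdiv; apply (Rmult_le_reg_r (ln 2)); [lra |].
  rewrite Rmult_assoc, Rinv_l; lra.
Qed.

Theorem lemma6p2
  (X : Type) (dist : X -> X -> R) (delta : R)
  (G : Type) (mul : G -> G -> G) (inv : G -> G) (e : G) (act : G -> X -> X)
  (U : list G) (x0 y0 : X) (d : R) :
  0 < delta ->
  is_metric dist -> is_geodesic dist -> hyperbolic dist delta ->
  is_group mul inv e -> isometric_action dist mul e act ->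
  NoDup U ->
  Rbar_le (avg_disp dist act U x0) (Rbar_plus (E_U dist act U) delta) ->
  (d = 1 \/ d = ln (2 * card_list U) / ln 2) ->
  sphere dist x0 (1000 * d * delta) y0 ->
  INR (count_in U (fun u => exists y z : X,
         cball dist y0 (100 * d * delta) y /\ sphere dist x0 (1000 * d * delta) y /\
         cball dist y0 (100 * d * delta) z /\ sphere dist x0 (1000 * d * delta) z /\
         in_Uyz dist inv act U x0 d delta y z u))
  <= 2 / 3 * card_list U.
Proof.
  intros Hdelta Hmetric _ Hhyp Hgroup Hact _ Hnear Hd Hy0.
  match goal with |- context [count_in U ?Q] => set (P := Q) end.
  destruct U as [|u0 U'] eqn:HU; [unfold count_in, card_list; simpl; lra |].
  rewrite <- HU in *.
  assert (Hn : 1 <= card_list U)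
    by (unfold card_list; rewrite HU; cbn [length]; rewrite S_INR;
        pose proof (pos_INR (length U')); lra).
  assert (Hd1 : 1 <= d)
    by (destruct Hd as [-> | ->]; [lra | now apply one_le_ln_double_div_ln2]).
  set (D := d * delta).
  assert (HD : delta <= D)
    by (unfold D; rewrite <- (Rmult_1_l delta) at 1; apply Rmult_le_compat_r; lra).
  unfold sphere in Hy0.
  replace (1000 * d * delta) with (1000 * D) in Hy0 by (unfold D; ring).
  assert (Hsum : total_disp dist act U y0 <=
      total_disp dist act U x0 + 2 * (1000 * D) * card_list U
      - (3796 * D - 2 * delta) * INR (count_in U P)).
  { apply sum_le_sub_count.
    - intros u _; rewrite <- Hy0.
      now apply (displacement_le (mul := mul) (e := e)).
    - intros u _ (y & z & Hyy0 & Hy & Hzy0 & Hz & _ & HL & Hgy & Hgz).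
      unfold cball, sphere in *.
      assert (Hdisp := displacement_le_of_gromov_le Hmetric Hhyp Hgroup Hact
                 u x0 y0 y z (1000 * D) (100 * D) D).
      unfold D in *; lra. }
  assert (Hx0 := total_disp_le_of_near_inf dist act U x0 y0 delta ltac:(lra) Hnear).
  apply (le_two_thirds _ _ (2000 * D + delta) (3796 * D - 2 * delta)); lra.
Qed.
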